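(* Let $\mathcal{G}$ be an $A$-compatible multidigraph. (i) Let $\zeta$ be a spanning forest of $\mathcal{G}$ and $\tau$ a connected component of $\zeta$. If $\tau$ contains a node in $\mathcal{N}_i$ for some $i\ge0$, then the root of $\tau$ is in $\mathcal{N}_i\cup\mathcal{N}_0$. (ii) For $B\subseteq\mathcal{N}$ with $|B|=|F|$, $\Theta_\mathcal{G}(F,B)=\emptyset$ if $B$ contains two elements of $\mathcal{N}_i$ for some $i>0$.
   Context: $R$ is a partially ordered commutative ring. Let $d\ge0$, $m_0,m_1,\dots,m_d$ nonnegative integers with $m=m_0+m_1+\cdots+m_d$. $A\in R^{m\times m}$ and $b\in R^m$ have block form: for $i=1,\dots,d$ the rows with indices in $\mathcal{N}_i=\{1+\sum_{j<i}m_j,\dots,\sum_{j\le i}m_j\}$ have the form $(0\cdots0\ A_i\ 0\cdots0)$ with $A_i\in R^{m_i\times m_i}$ occupying the columns indexed by $\mathcal{N}_i$, and the corresponding part $b^i$ of $b$ has at most one nonzero entry; the last $m_0$ rows form an arbitrary $A_0\in R^{m_0\times m}$ with arbitrary $b^0\in R^{m_0}$. Let $\mathcal{N}=\{1,\dots,m+1\}$ and $\mathcal{N}_0=\{m-m_0+1,\dots,m+1\}$. Fix $j_i\in\mathcal{N}_i$ ($i=1,\dots,d$) such that $b_j=0$ for all $j\le m-m_0$ with $j\notin\{j_1,\dots,j_d\}$, and let $F=\{j_1,\dots,j_d,m+1\}$. A multidigraph $\mathcal{G}=(\mathcal{N},\mathcal{E})$ has source/target maps $s,t$, no self-loops, labeling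 $\pi\colon\mathcal{E}\to R$, and Laplacian $L_{ij}=\sum_{e:s(e)=j,t(e)=i}\pi(e)$ ($i\ne j$), $L_{ii}=-\sum_{k\ne i}L_{ki}$. $\mathcal{G}$ is $A$-compatible if (i) there is no edge from a node in $\mathcal{N}_i$ ($i\ge0$) to a node in $\mathcal{N}_j$ with $i\ne j$, $j\ge1$; (ii) for $\ell\notin\{j_1,\dots,j_d,m+1\}$, the $\ell$-th row of $L$ equals the $\ell$-th row of the $m\times(m+1)$ matrix $(A\,|\,b)$. Trees/forests: subgraphs whose underlying undirected graph is acyclic (connected for trees); a tree is rooted at $N$ if $N$ is its only node without outgoing edges; spanning means node set $\mathcal{N}$. For $F,B\subseteq\mathcal{N}$ with $|F|=|B|$, $\Theta_\mathcal{G}(F,B)$ is the set of spanning forests with $|B|$ components, each containing a node of $F$ and being a tree rooted at a node of $B$. *)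

From mathcomp Require Import all_boot all_order all_algebra.
Set Implicit Arguments. Unset Strict Implicit. Unset Printing Implicit Defensive.
Import Order.TTheory GRing.Theory.

Definition po_ring (R : comPzRingType) (le : rel R) : Prop :=
  [/\ reflexive le, antisymmetric le, transitive le,
      (forall x y z, le x y -> le (x + z)%R (y + z)%R) &
      (forall x y, le 0%R x -> le 0%R y -> le 0%R (x * y)%R)].

(* Blocks of indices (paper's 1-based indices, as natural numbers).    *)
Definition inNpos (mb : nat -> nat) (i k : nat) : bool :=
  ((\sum_(1 <= j < i) mb j < k) && (k <= \sum_(1 <= j < i.+1) mb j))%N.

Definition inN0 (mb : nat -> nat) (m k : nat) : bool :=
  (m - mb 0%N < k)%N && (k <= m.+1)%N.

Definition inN (mb : nat -> nat) (m i k : nat) : bool :=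
  if i == 0%N then inN0 mb m k else inNpos mb i k.

(* Nodes: the node v : 'I_(m.+1) is the paper's node v + 1, so that     *)
(* the node set is N = {1, ..., m+1}.                                  *)
Notation node m := 'I_(m.+1).
Definition pidx (m : nat) (v : node m) : nat := (v : nat).+1.

Definition Fset (m d : nat) (jsel : nat -> nat) : {set node m} :=
  [set v : node m | (pidx v == m.+1)
     || [exists i : 'I_d.+1, (0 < (i : nat))%N && (jsel i == pidx v)]].

Section Graphs.
Variable R : comPzRingType.
Variable m : nat.
Variable E : finType.
Variables s t : E -> node m.
Variable pi : E -> R.

Definition offL (i j : node m) : R := (\sum_(e | (s e == j) && (t e == i)) pi e)%R.
Definition laplacian : 'M[R]_(m.+1) :=
  \matrix_(i, j) (if i == j then - \sum_(k | k != i) offL k i else offL i j)%R.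

Definition joins (e : E) (u v : node m) : bool :=
  ((s e == u) && (t e == v)) || ((s e == v) && (t e == u)).

(* A subgraph with node set N is given by its edge set S.
   An (undirected) cycle in S: pairwise distinct edges es_0, ..., es_k
   of S and pairwise distinct vertices vs_0, ..., vs_k such that es_l
   joins vs_l and vs_(l+1 mod k+1).  (Parallel edges u->v, v->u or
   u->v, u->v form a cycle of length 2 of the underlying multigraph.) *)
Definition has_cycle (S : {set E}) : Prop :=
  exists k (es : 'I_k.+1 -> E) (vs : 'I_k.+1 -> node m),
    [/\ injective es, injective vs, (forall l, es l \in S) &
        forall l, joins (es l) (vs l) (vs (ordS l))].

Definition forest (S : {set E}) : Prop := ~ has_cycle S.

Definition adjS (S : {set E}) : rel (node m) :=
  fun u v => [exists e in S, joins e u v].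
Definition comp_of (S : {set E}) (u : node m) : {set node m} :=
  [set v | connect (adjS S) u v].
Definition components (S : {set E}) : {set {set node m}} :=
  [set comp_of S u | u : node m].

(* the component tau with node set C (and edges of S inside C) is a tree
   rooted at r: r is the only node of C without outgoing edges in tau *)
Definition rooted_at (S : {set E}) (C : {set node m}) (r : node m) : Prop :=
  r \in C /\
  forall v, v \in C ->
    ((~~ [exists e in S, (s e == v) && (t e \in C)]) <-> v = r).

Definition Theta (F B : {set node m}) (S : {set E}) : Prop :=
  [/\ forest S, #|components S| = #|B| &
      forall C, C \in components S ->
        (exists2 f, f \in F & f \in C) /\ (exists2 r, r \in B & rooted_at S C r)].

End Graphs.

Definition Abmx (R : comPzRingType) (m : nat) (A : 'M[R]_m) (b : 'cV[R]_m)
  : 'M[R]_(m, m.+1) := castmx (erefl m, addn1 m) (row_mx A b).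

Definition A_compatible (R : comPzRingType) (d m : nat) (mb : nat -> nat)
  (jsel : nat -> nat) (A : 'M[R]_m) (b : 'cV[R]_m)
  (E : finType) (s t : E -> node m) (pi : E -> R) : Prop :=
  (forall e (i j : nat), (i <= d)%N -> (1 <= j <= d)%N -> i <> j ->
     inN mb m i (pidx (s e)) -> ~~ inN mb m j (pidx (t e))) /\
  (forall l : 'I_m, widen_ord (leqnSn m) l \notin Fset m d jsel ->
     forall j : node m,
       laplacian s t pi (widen_ord (leqnSn m) l) j = Abmx A b l j).

From mathcomp Require Import all_boot all_order all_algebra.
From mathcomp Require Import zify.
Set Implicit Arguments. Unset Strict Implicit. Unset Printing Implicit Defensive.

(* Compatibility (i) says that edges leaving [N_i :|: N_0] stay there. In a
   forest one cannot follow out-edges inside a finite node set forever, so a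
   component meeting [N_i] has a node of [N_i :|: N_0] without out-edge into the
   component, and that node is the root: this is (i).  A forest in [Theta F B]
   has exactly one component rooted at each node of [B]; by (i), a component
   rooted in [N_i], [i > 0], finds its node of [F] in [N_i], so it contains [j_i].
   Two roots in [N_i] would therefore share the component of [j_i]. *)

Lemma iter_rho (T : finType) (f : T -> T) x :
  exists a k, iter (a + k.+1) f x = iter a f x
              /\ injective (fun l : 'I_k.+1 => iter (a + l) f x).
Proof.
set n := order f x.
have loop_n : iter n f x \in traject f x n := looping_order f x.
set a := index (iter n f x) (traject f x n).
have a_lt_n : a < n by rewrite -[X in _ < X](size_traject f x n) index_mem.
exists a, (n - a).-1.
have -> : a + (n - a).-1.+1 = n by lia.
split; first by rewrite -(nth_traject f a_lt_n) nth_index.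
move=> l l' /eqP; have lt_n (j : 'I_(n - a).-1.+1) : a + j < n by have := ltn_ord j; lia.
rewrite -(nth_traject f (lt_n l)) -(nth_traject f (lt_n l')).
rewrite nth_uniq ?size_traject ?lt_n ?orbit_uniq // eqn_add2l => /eqP.
exact: val_inj.
Qed.

Section Forests.
Variables (m : nat) (E : finType) (s t : E -> node m).
Implicit Types (S : {set E}) (C G : {set node m}) (P : pred (node m)).

Lemma adjS_sym S : symmetric (adjS s t S).
Proof.
by move=> u v; apply/exists_inP/exists_inP => -[e eS j]; exists e; rewrite // /joins orbC.
Qed.

Lemma components_comp_of S C w :
  C \in components s t S -> w \in C -> C = comp_of s t S w.
Proof.
case/imsetP => u _ ->; rewrite inE => uw.
have sym := sym_connect_sym (adjS_sym S).
apply/setP => z; rewrite !inE; apply/idP/idP; last exact: connect_trans.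
by apply: connect_trans; rewrite sym.
Qed.

Lemma components_eq S C C' w : C \in components s t S -> C' \in components s t S ->
  w \in C -> w \in C' -> C = C'.
Proof.
by move=> CS C'S wC wC'; rewrite (components_comp_of CS wC) (components_comp_of C'S wC').
Qed.

(* Otherwise iterating a choice of out-edges into [G] from [v] traces a cycle. *)
Lemma forest_has_sink S G v : forest s t S -> v \in G ->
  exists2 u, u \in G & ~~ [exists e in S, (s e == u) && (t e \in G)].
Proof.
move=> forS vG; case: (boolP [exists u in G, ~~ [exists e in S, (s e == u) && (t e \in G)]]).
  by case/exists_inP => u; exists u.
rewrite negb_exists_in => /forall_inP all_out; case: forS.
pose out u := [pick e in S | (s e == u) && (t e \in G)].
have outP u : u \in G -> exists e, [/\ out u = Some e, e \in S, s e = u & t e \in G].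
  move=> uG; rewrite /out; case: pickP => [e /andP[eS /andP[/eqP se teG]]|none].
    by exists e.
  by have /negbNE/exists_inP[e eS eu] := all_out u uG; have := none e; rewrite eS eu.
pose f u := oapp t u (out u).
have fG u : u \in G -> f u \in G by move=> /outP[e [outE _ _ ?]]; rewrite /f outE.
have iterG n : iter n f v \in G by elim: n => //= n; apply: fG.
have [e0 _] := outP v vG.
have [a [k [loop vs_inj]]] := iter_rho f v.
pose vs (l : 'I_k.+1) := iter (a + l) f v.
pose es (l : 'I_k.+1) := odflt e0 (out (vs l)).
have esP l : [/\ es l \in S, s (es l) = vs l & t (es l) = f (vs l)].
  by have [e [outE ? ? _]] := outP _ (iterG (a + l)); rewrite /es /f outE.
exists k, es, vs; split => //.
- move=> l l' ese; apply: vs_inj; change (vs l = vs l').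
  by have [_ <- _] := esP l; have [_ <- _] := esP l'; rewrite ese.
- by move=> l; case: (esP l).
move=> l; rewrite /joins; have [_ -> ->] := esP l; rewrite eqxx /=; apply/orP; left; apply/eqP.
rewrite /vs /= -iterS -addnS; case: (ltnP l k) => lk.
  by rewrite modn_small.
have -> : (l : nat) = k by have := ltn_ord l; lia.
by rewrite modnn addn0 loop.
Qed.

(* The sink of [C :&: P] provided by acyclicity has no out-edge into [C] at all,
   since out-edges leaving [P] stay in [P]; hence it is the root. *)
Lemma rooted_forest_root_closed S C r P v :
  forest s t S -> rooted_at s t S C r -> (forall e, P (s e) -> P (t e)) ->
  v \in C -> P v -> P r.
Proof.
move=> forS [_ sinkE] closedP vC Pv.
have vCP : v \in C :&: [set u | P u] by rewrite !inE vC Pv.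
have [u] := forest_has_sink forS vCP; rewrite !inE => /andP[uC Pu] no_out.
suff <- : u = r by [].
apply/(sinkE u uC)/exists_inP => -[e eS /andP[/eqP se teC]].
by case/exists_inP: no_out; exists e; rewrite // se eqxx !inE teC closedP ?se.
Qed.

Definition root_of S C : node m :=
  odflt ord0 [pick r in C | ~~ [exists e in S, (s e == r) && (t e \in C)]].

Lemma root_of_rooted S C r : rooted_at s t S C r -> root_of S C = r.
Proof.
move=> [rC sinkE]; rewrite /root_of; case: pickP => [u /andP[uC /(sinkE u uC)]|] //.
by move/(_ r); rewrite rC (sinkE r rC).2.
Qed.

(* The roots of the [#|B|] components are pairwise distinct elements of [B]. *)
Lemma Theta_rooted_component F B S r : Theta s t F B S -> r \in B ->
  exists2 C, C \in components s t S & rooted_at s t S C r.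
Proof.
case=> _ card_comp comp_rooted rB.
have rootP C : C \in components s t S -> rooted_at s t S C (root_of S C) /\ root_of S C \in B.
  by case/comp_rooted => _ [r' r'B r'root]; rewrite (root_of_rooted r'root).
have root_inj : {in components s t S &, injective (root_of S)}.
  move=> C C' CS C'S eq_root; have [[rC _] _] := rootP C CS; have [[rC' _] _] := rootP C' C'S.
  by apply: (components_eq CS C'S rC); rewrite eq_root.
have root_onto : root_of S @: components s t S = B.
  apply/eqP; rewrite eqEcard card_in_imset // card_comp leqnn andbT.
  by apply/subsetP => _ /imsetP[C CS ->]; exact: (rootP C CS).2.
by rewrite -root_onto in rB; case/imsetP: rB => C CS ->; exists C; last exact: (rootP C CS).1.
Qed.

End Forests.

Lemma leq_sum_nat1 (f : nat -> nat) a b : a <= b ->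
  \sum_(1 <= l < a) f l <= \sum_(1 <= l < b) f l.
Proof.
case: a => [|a] ab; first by rewrite big_geq.
by rewrite (@big_cat_nat _ _ _ a.+1 1 b) //= leq_addr.
Qed.

Lemma inNpos_cover (mb : nat -> nat) n k : 0 < k ->
  k <= \sum_(1 <= l < n.+1) mb l -> exists2 j, 1 <= j <= n & inNpos mb j k.
Proof.
move=> k_gt0; elim: n => [|n IHn] k_le_sumS; first by rewrite big_geq in k_le_sumS; lia.
case: (leqP k (\sum_(1 <= l < n.+1) mb l)) => k_le_sum.
  by case: (IHn k_le_sum) => j /andP[j_gt0 jn] jk; exists j; rewrite // j_gt0 leqW.
by exists n.+1 => //; apply/andP.
Qed.

Section Blocks.
Variables (mb : nat -> nat) (d m : nat).
Hypothesis Hm : m = \sum_(i < d.+1) mb i.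

Lemma m_split : m = mb 0 + \sum_(1 <= l < d.+1) mb l.
Proof. by rewrite Hm -(big_mkord xpredT) big_ltn. Qed.

Lemma inN_block_unique j j' k : j <= d -> j' <= d ->
  inN mb m j k -> inN mb m j' k -> j = j'.
Proof.
wlog lt_jj' : j j' / j < j'.
  move=> wlog jd j'd jk j'k; case: (ltngtP j j') => // lt; first exact: wlog.
  by apply/esym/wlog.
move=> _ j'd; rewrite /inN /inN0 /inNpos; have := m_split.
have -> : (j' == 0) = false by case: j' lt_jj' {j'd}.
case: eqP => [_|_].
- by have := leq_sum_nat1 mb (j'd : j'.+1 <= d.+1); lia.
- by have := leq_sum_nat1 mb (lt_jj' : j.+1 <= j'); lia.
Qed.

Lemma inN_cover k : 0 < k <= m.+1 -> exists2 j, j <= d & inN mb m j k.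
Proof.
move=> /andP[k_gt0 k_le].
case: (ltnP (\sum_(1 <= l < d.+1) mb l) k) => k_le_sum.
  by exists 0 => //; rewrite /inN /inN0 /=; apply/andP; split => //; have := m_split; lia.
have [j /andP[j_gt0 jd] jk] := inNpos_cover k_gt0 k_le_sum.
by exists j => //; rewrite /inN; case: eqP j_gt0 => // ->.
Qed.

Lemma node_block (v : node m) : exists2 j, j <= d & inN mb m j (pidx v).
Proof. by apply: inN_cover; rewrite /pidx ltn_ord. Qed.

Variable jsel : nat -> nat.
Hypothesis Hj : forall i : nat, 1 <= i <= d -> inN mb m i (jsel i).

Lemma Fset_block f i : f \in Fset m d jsel -> 1 <= i <= d ->
  inN mb m i (pidx f) -> pidx f = jsel i.
Proof.
move=> + /andP[i_gt0 id] fi; rewrite inE => /orP[/eqP fm|].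
  have : inN mb m 0 (pidx f) by rewrite fm /inN /inN0 /=; apply/andP; split => //; lia.
  by move/(inN_block_unique id (leq0n d) fi) => i0; rewrite i0 in i_gt0.
case/existsP => i' /andP[i'_gt0 /eqP ji']; rewrite -ji' in fi *.
have i'd : 1 <= i' <= d by rewrite i'_gt0 -ltnS ltn_ord.
by rewrite (inN_block_unique (proj2 (andP i'd)) id (Hj i'd) fi).
Qed.

Variables (E : finType) (s t : E -> node m).
Hypothesis no_cross_edge : forall e (i j : nat), i <= d -> 1 <= j <= d -> i <> j ->
  inN mb m i (pidx (s e)) -> ~~ inN mb m j (pidx (t e)).

Definition in_block_or_N0 i (v : node m) := inN mb m i (pidx v) || inN mb m 0 (pidx v).

Lemma block_edge_closed i e : i <= d ->
  in_block_or_N0 i (s e) -> in_block_or_N0 i (t e).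
Proof.
move=> id src; have [j jd jt] := node_block (t e).
case: (posnP j) => [j0|j_gt0]; first by rewrite /in_block_or_N0 -j0 jt orbT.
case: (eqVneq j i) => [ji|jni]; first by rewrite /in_block_or_N0 -ji jt.
have j1d : 1 <= j <= d by rewrite j_gt0 jd.
case/orP: src => [src|src].
- by move: (no_cross_edge id j1d (nesym (elimN eqP jni)) src); rewrite jt.
- have j0 : 0 <> j by move=> j0; rewrite -j0 in j_gt0.
  by move: (no_cross_edge (leq0n d) j1d j0 src); rewrite jt.
Qed.

Lemma rooted_root_block S C r i : forest s t S -> rooted_at s t S C r -> i <= d ->
  (exists2 v, v \in C & inN mb m i (pidx v)) -> in_block_or_N0 i r.
Proof.
move=> forS rooted id [v vC vi].
apply: (rooted_forest_root_closed forS rooted _ vC); last by rewrite /in_block_or_N0 vi.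
by move=> e; apply: block_edge_closed.
Qed.

Lemma Theta_root_component_jsel B S z i : Theta s t (Fset m d jsel) B S ->
  1 <= i <= d -> z \in B -> inN mb m i (pidx z) ->
  exists2 C, C \in components s t S &
    rooted_at s t S C z /\ exists2 w, w \in C & pidx w = jsel i.
Proof.
move=> thS i1d zB zi; have [C CS rooted] := Theta_rooted_component thS zB.
exists C => //; split => //.
have [forS _ comp_F] := thS; have [[f fF fC] _] := comp_F C CS.
have [j jd fj] := node_block f; exists f => //.
have i_gt0 : i != 0 by rewrite -lt0n; case/andP: i1d.
case/orP: (rooted_root_block forS rooted jd (ex_intro2 _ _ f fC fj)) => zj.
- have ij := inN_block_unique (proj2 (andP i1d)) jd zi zj.
  by rewrite -ij in fj; apply: Fset_block.
- by have i0 := inN_block_unique (proj2 (andP i1d)) (leq0n d) zi zj; rewrite i0 in i_gt0.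
Qed.

End Blocks.

Theorem lemma4p5
  (R : comPzRingType) (le : rel R) (HR : po_ring le)
  (d : nat) (mb : nat -> nat) (m : nat)
  (Hm : m = (\sum_(i < d.+1) mb i)%N)
  (A : 'M[R]_m) (b : 'cV[R]_m)
  (* block form of A: for 1 <= i <= d, rows in N_i vanish outside columns N_i *)
  (HA : forall (i : nat) (l j : 'I_m), (1 <= i <= d)%N ->
          inN mb m i l.+1 -> ~~ inN mb m i j.+1 -> A l j = 0%R)
  (* for 1 <= i <= d, b^i has at most one nonzero entry *)
  (Hb : forall (i : nat) (l l' : 'I_m), (1 <= i <= d)%N ->
          inN mb m i l.+1 -> inN mb m i l'.+1 ->
          b l ord0 != 0%R -> b l' ord0 != 0%R -> l = l')
  (* the chosen j_i in N_i *)
  (jsel : nat -> nat)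
  (Hj : forall i : nat, (1 <= i <= d)%N -> inN mb m i (jsel i))
  (Hbj : forall l : 'I_m, (l.+1 <= m - mb 0%N)%N ->
          (forall i : nat, (1 <= i <= d)%N -> jsel i != l.+1) -> b l ord0 = 0%R)
  (* the multidigraph G = (N, E) with source/target maps s, t and labels pi *)
  (E : finType) (s t : E -> 'I_m.+1) (pi : E -> R)
  (Hloop : forall e, s e != t e)
  (Hcomp : A_compatible d mb jsel A b s t pi) :
  (* (i) *)
  (forall (S : {set E}) (C : {set 'I_m.+1}) (r : 'I_m.+1) (i : nat),
     forest s t S -> C \in components s t S -> rooted_at s t S C r ->
     (i <= d)%N -> (exists2 v, v \in C & inN mb m i (pidx v)) ->
     inN mb m i (pidx r) || inN mb m 0 (pidx r))
  /\
  (* (ii) *)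
  (forall B : {set 'I_m.+1}, #|B| = #|Fset m d jsel| ->
     (exists i : nat, (1 <= i <= d)%N /\
        exists x y, [/\ x \in B, y \in B, x != y,
                        inN mb m i (pidx x) & inN mb m i (pidx y)]) ->
     forall S : {set E}, ~ Theta s t (Fset m d jsel) B S).
Proof.
have [no_cross_edge _] := Hcomp.
split=> [S C r i forS _ rooted|B _ [i [i1d [x [y [xB yB xy xi yi]]]]] S thS].
  exact: (rooted_root_block Hm no_cross_edge forS rooted).
have [Cx CxS [x_root [wx wxC wxE]]] :=
  Theta_root_component_jsel Hm Hj no_cross_edge thS i1d xB xi.
have [Cy CyS [y_root [wy wyC wyE]]] :=
  Theta_root_component_jsel Hm Hj no_cross_edge thS i1d yB yi.
have wxy : wx = wy by apply/val_inj/succn_inj; move: wxE wyE; rewrite /pidx => -> ->.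
have CxCy : Cx = Cy by apply: (components_eq CxS CyS wxC); rewrite wxy.
by move: xy; rewrite -(root_of_rooted x_root) -(root_of_rooted y_root) CxCy eqxx.
Qed.
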